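(* Let $n\geq 1$ and $x_1,\dots,x_n\in(0,\tfrac12]$. With $A_n,G_n,A'_n,G'_n$ as defined in the context, $$\left(\frac{A'_n}{G'_n}\right)^{A'_n+G'_n}\leq \left(\frac{A_n}{G_n}\right)^{A_n+G_n} \qquad\text{and}\qquad \left(\frac{A'_n}{G'_n}\right)^{A_n-G_n}\leq \left(\frac{A_n}{G_n}\right)^{A'_n-G'_n},$$ with equality in each if and only if $x_1=\cdots=x_n$.
   Context: $A_n=\frac1n\sum_{i=1}^n x_i$ and $G_n=\prod_{i=1}^n x_i^{1/n}$ are the arithmetic and geometric means of $x_1,\dots,x_n$; $A'_n=\frac1n\sum_{i=1}^n(1-x_i)$ and $G'_n=\prod_{i=1}^n(1-x_i)^{1/n}$ are the arithmetic and geometric means of $1-x_1,\dots,1-x_n$. *)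

From Stdlib Require Import Reals.
Open Scope R_scope.

Fixpoint fsum (n : nat) (f : nat -> R) : R :=
  match n with O => 0 | S m => fsum m f + f m end.

Fixpoint fprod (n : nat) (f : nat -> R) : R :=
  match n with O => 1 | S m => fprod m f * f m end.

Definition AM (n : nat) (x : nat -> R) : R := fsum n x / INR n.
Definition GM (n : nat) (x : nat -> R) : R := Rpower (fprod n x) (/ INR n).

Definition compl (x : nat -> R) : nat -> R := fun i => 1 - x i.

From Stdlib Require Import Reals Lra Lia Psatz Classical.
From Coquelicot Require Import Coquelicot.
Open Scope R_scope.

(* Put r = G / A and r' = G' / A'. Since A <= A', the gap inequality A' - G' < A - G forces
   r < r', and both inequalities then follow from the strict monotonicity of ln r / (1 - r) and
   (1 + r) ln r / (1 - r) on (0, 1). The gap inequality comes from moving the points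
   1/2 -/+ s (1/2 - x i) from s = 0 (all equal to 1/2) to s = 1 (compl x and x): the derivative
   of the difference of the two gaps is positive by AM-GM for two numbers, Chebyshev's sum
   inequality and AM-GM for n numbers. *)

Definition constant_on (n : nat) (v : nat -> R) : Prop :=
  forall i j, (i < n)%nat -> (j < n)%nat -> v i = v j.

Lemma exists_ne_of_not_constant_on n v c :
  ~ constant_on n v -> exists i, (i < n)%nat /\ v i <> c.
Proof.
  intros Hv. apply NNPP; intros Hno. apply Hv; intros i j Hi Hj.
  transitivity c; [|symmetry]; apply NNPP; intros Hne; apply Hno; eauto.
Qed.

Lemma le_and_eq_iff_of_lt (a b : R) (P : Prop) :
  (P -> a = b) -> (~ P -> a < b) -> a <= b /\ (a = b <-> P).
Proof.
  intros Heq Hlt. destruct (classic P) as [HP | HnP].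
  - rewrite (Heq HP). split; [lra | tauto].
  - specialize (Hlt HnP). split; [lra | split; [lra | tauto]].
Qed.

Lemma fsum_ext n (f g : nat -> R) :
  (forall i, (i < n)%nat -> f i = g i) -> fsum n f = fsum n g.
Proof.
  induction n as [|n IH]; intros H; simpl; [reflexivity|].
  rewrite IH by (intros; apply H; lia). rewrite H by lia. reflexivity.
Qed.

Lemma fsum_plus n (f g : nat -> R) : fsum n (fun i => f i + g i) = fsum n f + fsum n g.
Proof. induction n as [|n IH]; simpl; [lra | rewrite IH; ring]. Qed.

Lemma fsum_scal n c (f : nat -> R) : fsum n (fun i => c * f i) = c * fsum n f.
Proof. induction n as [|n IH]; simpl; [lra | rewrite IH; ring]. Qed.

Lemma fsum_const n c : fsum n (fun _ => c) = INR n * c.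
Proof. induction n as [|n IH]; simpl fsum; [simpl; ring | rewrite IH, S_INR; ring]. Qed.

Lemma fsum_bilinear n (f g : nat -> R) a b c d :
  fsum n (fun j => a * (f j * g j) - b * g j - c * f j + d)
  = a * fsum n (fun j => f j * g j) - b * fsum n g - c * fsum n f + INR n * d.
Proof. induction n as [|n IH]; simpl fsum; [simpl; ring | rewrite IH, S_INR; ring]. Qed.

Lemma fsum_le n (f g : nat -> R) :
  (forall i, (i < n)%nat -> f i <= g i) -> fsum n f <= fsum n g.
Proof.
  induction n as [|n IH]; intros H; simpl; [lra|].
  apply Rplus_le_compat; [apply IH; intros; apply H | apply H]; lia.
Qed.

Lemma fsum_nonneg n (f : nat -> R) : (forall i, (i < n)%nat -> 0 <= f i) -> 0 <= fsum n f.
Proof. intros H. rewrite <- (Rmult_0_r (INR n)), <- fsum_const. now apply fsum_le. Qed.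

Lemma fsum_lt n (f g : nat -> R) j : (j < n)%nat ->
  (forall i, (i < n)%nat -> f i <= g i) -> f j < g j -> fsum n f < fsum n g.
Proof.
  induction n as [|n IH]; intros Hj H Hfg; [lia|]. simpl.
  destruct (Nat.eq_dec j n) as [-> | Hne].
  - apply Rplus_le_lt_compat; [apply fsum_le; intros; apply H; lia | exact Hfg].
  - apply Rplus_lt_le_compat; [apply IH; [lia | intros; apply H; lia | exact Hfg] | apply H; lia].
Qed.

Lemma fprod_ext n (f g : nat -> R) :
  (forall i, (i < n)%nat -> f i = g i) -> fprod n f = fprod n g.
Proof.
  induction n as [|n IH]; intros H; simpl; [reflexivity|].
  rewrite IH by (intros; apply H; lia). rewrite H by lia. reflexivity.
Qed.

Lemma fprod_pos_ln n (f : nat -> R) : (forall i, (i < n)%nat -> 0 < f i) ->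
  0 < fprod n f /\ ln (fprod n f) = fsum n (fun i => ln (f i)).
Proof.
  induction n as [|n IH]; simpl; intros H; [split; [lra | apply ln_1]|].
  destruct IH as [Hpos Hln]; [intros; apply H; lia|].
  assert (0 < f n) by (apply H; lia).
  split; [nra | rewrite ln_mult, Hln by auto; reflexivity].
Qed.

Lemma GM_pos n v : 0 < GM n v.
Proof. apply exp_pos. Qed.

Lemma GM_ext n (u v : nat -> R) :
  (forall i, (i < n)%nat -> u i = v i) -> GM n u = GM n v.
Proof. intros H. unfold GM. rewrite (fprod_ext n u v H). reflexivity. Qed.

Lemma GM_exp_AM_ln n v : (forall i, (i < n)%nat -> 0 < v i) ->
  GM n v = exp (AM n (fun i => ln (v i))).
Proof.
  intros H. unfold GM, Rpower, AM. destruct (fprod_pos_ln n v H) as [_ ->].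
  f_equal. unfold Rdiv. ring.
Qed.

Lemma ln_lt_tangent y p : 0 < y -> 0 < p -> y <> p -> ln y < ln p + (y - p) / p.
Proof.
  intros Hy Hp Hne.
  assert (Hd : ln y - ln p <> 0) by (intros E; apply Hne, ln_inv; lra).
  pose proof (exp_ineq1 _ Hd) as E.
  unfold Rminus in E. rewrite exp_plus, exp_Ropp, !exp_ln in E by assumption.
  apply (Rmult_lt_compat_l p) in E; [|assumption].
  replace (p * (y * / p)) with y in E by (field; lra).
  replace ((y - p) / p) with (y / p - 1) by (field; lra).
  apply (Rmult_lt_reg_l p); [assumption|].
  replace (p * (ln p + (y / p - 1))) with (p * ln p + y - p) by (field; lra). nra.
Qed.

Lemma ln_le_tangent y p : 0 < y -> 0 < p -> ln y <= ln p + (y - p) / p.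
Proof.
  intros Hy Hp. destruct (Req_dec y p) as [-> | Hne]; [|left; apply ln_lt_tangent; auto].
  unfold Rminus. rewrite Rplus_opp_r. unfold Rdiv. lra.
Qed.

Lemma AM_ext n (f g : nat -> R) :
  (forall i, (i < n)%nat -> f i = g i) -> AM n f = AM n g.
Proof. intros H. unfold AM. rewrite (fsum_ext n f g H). reflexivity. Qed.

Lemma two_mul_le_add (a b c : R) : 0 <= a -> 0 <= b -> 0 <= c -> a * b = c * c -> 2 * c <= a + b.
Proof.
  intros Ha Hb Hc Hab. destruct (Rle_lt_dec (2 * c) (a + b)) as [|Hlt]; [assumption|].
  pose proof (Rle_0_sqr (a - b)). unfold Rsqr in *. nra.
Qed.

Lemma mul_sub_inv_sqrt_nonneg a b u v : 0 < u -> 0 < v -> (a - b) * (u - v) <= 0 ->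
  0 <= (a - b) * (/ sqrt u - / sqrt v).
Proof.
  intros Hu Hv Hord.
  pose proof (sqrt_lt_R0 u Hu). pose proof (sqrt_lt_R0 v Hv).
  rewrite <- (sqrt_sqrt u), <- (sqrt_sqrt v) in Hord by lra.
  replace ((a - b) * (/ sqrt u - / sqrt v)) with ((a - b) * (sqrt v - sqrt u) / (sqrt u * sqrt v))
    by (field; lra).
  apply Rdiv_le_0_compat; nra.
Qed.

Section Means.

Variable n : nat.
Hypothesis n_pos : (1 <= n)%nat.

Let INR_n_pos : 0 < INR n.
Proof. apply lt_0_INR; lia. Qed.

Lemma AM_plus (f g : nat -> R) : AM n (fun i => f i + g i) = AM n f + AM n g.
Proof. unfold AM. rewrite fsum_plus. field. lra. Qed.

Lemma AM_scal c (f : nat -> R) : AM n (fun i => c * f i) = c * AM n f.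
Proof. unfold AM. rewrite fsum_scal. field. lra. Qed.

Lemma AM_const c : AM n (fun _ => c) = c.
Proof. unfold AM. rewrite fsum_const. field. lra. Qed.

Lemma AM_affine c d (f : nat -> R) : AM n (fun i => c + d * f i) = c + d * AM n f.
Proof. unfold AM. rewrite fsum_plus, fsum_scal, fsum_const. field. lra. Qed.

Lemma AM_le (f g : nat -> R) :
  (forall i, (i < n)%nat -> f i <= g i) -> AM n f <= AM n g.
Proof.
  intros H. unfold AM, Rdiv. apply Rmult_le_compat_r; [left; apply Rinv_0_lt_compat; lra|].
  now apply fsum_le.
Qed.

Lemma AM_lt (f g : nat -> R) j : (j < n)%nat ->
  (forall i, (i < n)%nat -> f i <= g i) -> f j < g j -> AM n f < AM n g.
Proof.
  intros Hj H Hfg. unfold AM, Rdiv. apply Rmult_lt_compat_r; [apply Rinv_0_lt_compat; lra|].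
  now apply (fsum_lt n f g j).
Qed.

(* Chebyshev's sum inequality, from the sign of the double sum of (f i - f j) (g i - g j). *)
Lemma AM_mul_ge (f g : nat -> R) :
  (forall i j, (i < n)%nat -> (j < n)%nat -> 0 <= (f i - f j) * (g i - g j)) ->
  AM n f * AM n g <= AM n (fun i => f i * g i).
Proof.
  intros H.
  assert (Hdouble : 0 <= fsum n (fun i => fsum n (fun j => (f i - f j) * (g i - g j)))).
  { apply fsum_nonneg; intros i Hi. apply fsum_nonneg; auto. }
  rewrite (fsum_ext n _ (fun i => INR n * (f i * g i) - fsum n f * g i - fsum n g * f i
                                  + fsum n (fun j => f j * g j))) in Hdouble.
  - rewrite fsum_bilinear in Hdouble. unfold AM.
    apply (Rmult_le_reg_l (INR n * INR n)); [nra|].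
    replace (INR n * INR n * (fsum n f / INR n * (fsum n g / INR n))) with (fsum n f * fsum n g)
      by (field; lra).
    replace (INR n * INR n * (fsum n (fun i => f i * g i) / INR n))
      with (INR n * fsum n (fun i => f i * g i)) by (field; lra).
    lra.
  - intros i Hi.
    rewrite (fsum_ext n _ (fun j => 1 * (f j * g j) - f i * g j - g i * f j + f i * g i))
      by (intros; ring).
    rewrite fsum_bilinear. ring.
Qed.

Lemma GM_mult (u v : nat -> R) :
  (forall i, (i < n)%nat -> 0 < u i) -> (forall i, (i < n)%nat -> 0 < v i) ->
  GM n (fun i => u i * v i) = GM n u * GM n v.
Proof.
  intros Hu Hv. rewrite !GM_exp_AM_ln, <- exp_plus, <- AM_plus by (auto; intros i Hi;
    specialize (Hu i Hi); specialize (Hv i Hi); nra).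
  f_equal. apply AM_ext; intros i Hi. apply ln_mult; auto.
Qed.

Lemma GM_inv (v : nat -> R) :
  (forall i, (i < n)%nat -> 0 < v i) -> GM n (fun i => / v i) = / GM n v.
Proof.
  intros Hv. rewrite !GM_exp_AM_ln, <- exp_Ropp by (auto; intros; apply Rinv_0_lt_compat; auto).
  f_equal. replace (- AM n (fun i => ln (v i))) with (-1 * AM n (fun i => ln (v i))) by ring.
  rewrite <- AM_scal.
  apply AM_ext; intros i Hi. rewrite ln_Rinv by auto. ring.
Qed.

Lemma GM_eq_AM_of_constant (v : nat -> R) :
  (forall i, (i < n)%nat -> 0 < v i) -> constant_on n v -> GM n v = AM n v.
Proof.
  intros Hv Hc. assert (H0 : (0 < n)%nat) by lia.
  rewrite GM_exp_AM_ln by auto.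
  rewrite (AM_ext n _ (fun _ => ln (v 0%nat))), (AM_ext n v (fun _ => v 0%nat))
    by (intros i Hi; rewrite (Hc i 0%nat); auto).
  rewrite !AM_const. apply exp_ln, Hv, H0.
Qed.

(* The tangent line of ln at the arithmetic mean bounds every ln (v i) from above. *)
Lemma GM_lt_AM (v : nat -> R) :
  (forall i, (i < n)%nat -> 0 < v i) -> ~ constant_on n v -> GM n v < AM n v.
Proof.
  intros Hv Hnc. set (A := AM n v).
  assert (HA : 0 < A).
  { destruct (exists_ne_of_not_constant_on n v 0 Hnc) as [j [Hj _]].
    rewrite <- (AM_const 0). apply (AM_lt _ _ j); auto; intros; left; auto. }
  destruct (exists_ne_of_not_constant_on n v A Hnc) as [j [Hj HjA]].
  assert (Htangent : AM n (fun i => (ln A - 1) + / A * v i) = ln A).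
  { rewrite AM_affine. fold A. field. lra. }
  rewrite GM_exp_AM_ln, <- (exp_ln A), <- Htangent by auto.
  apply exp_increasing, (AM_lt _ _ j); auto.
  - intros i Hi. replace (ln A - 1 + / A * v i) with (ln A + (v i - A) / A) by (field; lra).
    apply ln_le_tangent; auto.
  - replace (ln A - 1 + / A * v j) with (ln A + (v j - A) / A) by (field; lra).
    apply ln_lt_tangent; auto.
Qed.

(* With w = sqrt (p m): AM-GM for two numbers pairs the terms into 2 GM(w) k / w, Chebyshev
   separates AM (k / w) >= AM k AM (1 / w), and AM-GM gives AM (1 / w) > 1 / GM(w). *)
Lemma twice_AM_lt_GM_weighted (p m k : nat -> R) :
  (forall i, (i < n)%nat -> 0 < p i) -> (forall i, (i < n)%nat -> 0 < m i) ->
  (forall i, (i < n)%nat -> 0 <= k i) -> 0 < AM n k ->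
  (forall i j, (i < n)%nat -> (j < n)%nat -> (k i - k j) * (p i * m i - p j * m j) <= 0) ->
  ~ constant_on n (fun i => p i * m i) ->
  2 * AM n k < GM n p * AM n (fun i => k i / p i) + GM n m * AM n (fun i => k i / m i).
Proof.
  intros Hp Hm Hk HK Hord Hnc.
  set (w := fun i => sqrt (p i * m i)).
  assert (Hpm : forall i, (i < n)%nat -> 0 < p i * m i).
  { intros i Hi. apply Rmult_lt_0_compat; auto. }
  assert (Hw : forall i, (i < n)%nat -> 0 < w i) by (intros i Hi; apply sqrt_lt_R0; auto).
  assert (Hww : forall i, (i < n)%nat -> w i * w i = p i * m i).
  { intros i Hi. apply sqrt_sqrt. left; auto. }
  set (g := GM n w).
  assert (Hgg : g * g = GM n p * GM n m).
  { unfold g. rewrite <- !GM_mult by auto. apply GM_ext; auto. }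
  assert (Hpair : forall i, (i < n)%nat ->
            2 * (g * (k i / w i)) <= GM n p * (k i / p i) + GM n m * (k i / m i)).
  { intros i Hi. specialize (Hp i Hi). specialize (Hm i Hi). specialize (Hk i Hi).
    specialize (Hw i Hi). specialize (Hww i Hi). pose proof (GM_pos n p). pose proof (GM_pos n m).
    apply two_mul_le_add.
    - apply Rmult_le_pos, Rdiv_le_0_compat; lra.
    - apply Rmult_le_pos, Rdiv_le_0_compat; lra.
    - apply Rmult_le_pos, Rdiv_le_0_compat; [left; apply GM_pos | lra | lra].
    - replace (g * (k i / w i) * (g * (k i / w i))) with (g * g * (k i * k i) / (w i * w i))
        by (field; lra).
      rewrite Hgg, Hww. field. lra. }
  assert (Hcheb : AM n k * AM n (fun i => / w i) <= AM n (fun i => k i / w i)).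
  { apply AM_mul_ge. intros i j Hi Hj. apply mul_sub_inv_sqrt_nonneg; auto. }
  assert (Hamgm : / g < AM n (fun i => / w i)).
  { unfold g. rewrite <- GM_inv by auto.
    apply GM_lt_AM; [intros; apply Rinv_0_lt_compat; auto|].
    intros Hc. apply Hnc. intros i j Hi Hj.
    rewrite <- (Hww i Hi), <- (Hww j Hj), <- (Rinv_inv (w i)), <- (Rinv_inv (w j)), (Hc i j Hi Hj).
    reflexivity. }
  assert (Hg : 0 < g) by apply GM_pos.
  assert (Hsum : 2 * (g * AM n (fun i => k i / w i))
                 <= GM n p * AM n (fun i => k i / p i) + GM n m * AM n (fun i => k i / m i)).
  { rewrite <- !AM_scal, <- AM_plus. apply AM_le. intros i Hi.
    specialize (Hpair i Hi). lra. }
  enough (AM n k < g * AM n (fun i => k i / w i)) by lra.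
  apply Rlt_le_trans with (g * (AM n k * AM n (fun i => / w i))); [|apply Rmult_le_compat_l; lra].
  replace (AM n k) with (g * (AM n k * / g)) at 1 by (field; lra).
  apply Rmult_lt_compat_l, Rmult_lt_compat_l; assumption.
Qed.

Lemma twice_AM_lt_GM_symmetric a c (k : nat -> R) : 0 < c ->
  (forall i, (i < n)%nat -> 0 <= k i) -> (forall i, (i < n)%nat -> 0 < a - c * k i) ->
  ~ constant_on n k ->
  2 * AM n k < GM n (fun i => a + c * k i) * AM n (fun i => k i / (a + c * k i))
               + GM n (fun i => a - c * k i) * AM n (fun i => k i / (a - c * k i)).
Proof.
  intros Hc Hk Hm Hnc.
  assert (Hp : forall i, (i < n)%nat -> 0 < a + c * k i).
  { intros i Hi. specialize (Hk i Hi). specialize (Hm i Hi). nra. }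
  apply twice_AM_lt_GM_weighted; auto.
  - destruct (exists_ne_of_not_constant_on n k 0 Hnc) as [j [Hj Hkj]].
    rewrite <- (AM_const 0). apply (AM_lt _ _ j); auto. specialize (Hk j Hj). lra.
  - intros i j Hi Hj. pose proof (Hk i Hi). pose proof (Hk j Hj).
    replace ((k i - k j) * ((a + c * k i) * (a - c * k i) - (a + c * k j) * (a - c * k j)))
      with (- (c * c) * ((k i - k j) * (k i - k j)) * (k i + k j)) by ring.
    enough (0 <= c * c * ((k i - k j) * (k i - k j)) * (k i + k j)) by lra.
    apply Rmult_le_pos; [apply Rmult_le_pos; apply Rle_0_sqr | lra].
  - intros Hpm. apply Hnc. intros i j Hi Hj. specialize (Hpm i j Hi Hj). cbv beta in Hpm.
    pose proof (Hk i Hi). pose proof (Hk j Hj).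
    assert (Hsq : (c * c) * ((k i - k j) * (k i + k j)) = 0) by lra.
    apply Rmult_integral in Hsq as [Hcc | Hsq]; [nra|].
    apply Rmult_integral in Hsq as [Hd | Hs]; lra.
Qed.

End Means.

Lemma is_derive_fsum n (f : nat -> R -> R) (df : nat -> R) t :
  (forall i, (i < n)%nat -> is_derive (f i) t (df i)) ->
  is_derive (fun s => fsum n (fun i => f i s)) t (fsum n df).
Proof.
  induction n as [|n IH]; intros H; simpl; [auto_derive; reflexivity|].
  apply (is_derive_plus (fun s => fsum n (fun i => f i s)) (f n)).
  - apply IH. intros; apply H; lia.
  - apply H; lia.
Qed.

Lemma is_derive_exp_AM_ln n (a b : nat -> R) t :
  (forall i, (i < n)%nat -> 0 < a i + t * b i) ->
  is_derive (fun s => exp (AM n (fun i => ln (a i + s * b i)))) t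
    (exp (AM n (fun i => ln (a i + t * b i))) * AM n (fun i => b i / (a i + t * b i))).
Proof.
  intros H. unfold AM.
  assert (Hsum : is_derive (fun s => fsum n (fun i => ln (a i + s * b i))) t
                   (fsum n (fun i => b i / (a i + t * b i)))).
  { apply (is_derive_fsum n (fun i s => ln (a i + s * b i))). intros i Hi.
    specialize (H i Hi). auto_derive; [lra | field; lra]. }
  pose proof (is_derive_comp exp (fun s => fsum n (fun i => ln (a i + s * b i)) / INR n) t _ _
                (is_derive_exp _) (is_derive_scal_l _ _ _ (/ INR n) Hsum)) as Hcomp.
  simpl in Hcomp. unfold scal in Hcomp; simpl in Hcomp; unfold mult in Hcomp; simpl in Hcomp.
  unfold Rdiv. rewrite Rmult_comm. exact Hcomp.
Qed.

Lemma lt_of_is_derive_pos (f df : R -> R) a b : a < b ->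
  (forall c, a <= c <= b -> is_derive f c (df c)) -> (forall c, a < c < b -> 0 < df c) ->
  f a < f b.
Proof.
  intros Hab Hd Hpos.
  destruct (MVT_cor2 f df a b Hab) as [c [Hc Hin]]; [intros; apply is_derive_Reals; auto|].
  specialize (Hpos c Hin). nra.
Qed.

Lemma AM_sub_GM_compl_lt n x : (1 <= n)%nat ->
  (forall i, (i < n)%nat -> 0 < x i <= 1/2) -> ~ constant_on n x ->
  AM n (compl x) - GM n (compl x) < AM n x - GM n x.
Proof.
  intros Hn Hx Hnc.
  set (k := fun i => 1/2 - x i).
  assert (Hk : forall i, (i < n)%nat -> 0 <= k i) by (intros i Hi; specialize (Hx i Hi); unfold k; lra).
  assert (Hplus : forall s i, 0 <= s -> (i < n)%nat -> 0 < 1/2 + s * k i).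
  { intros s i Hs Hi. specialize (Hk i Hi). nra. }
  assert (Hminus : forall s i, s <= 1 -> (i < n)%nat -> 0 < 1/2 + s * - k i).
  { intros s i Hs Hi. specialize (Hk i Hi). specialize (Hx i Hi). unfold k in *. nra. }
  set (E := fun (b : nat -> R) s => exp (AM n (fun i => ln (1/2 + s * b i)))).
  set (dE := fun (b : nat -> R) s => E b s * AM n (fun i => b i / (1/2 + s * b i))).
  set (D := fun s => E k s - E (fun i => - k i) s - 2 * s * AM n k).
  set (dD := fun s => dE k s - dE (fun i => - k i) s - 2 * AM n k).
  assert (HD0 : D 0 = 0).
  { unfold D, E. rewrite (AM_ext n _ (fun i => ln (1/2 + 0 * - k i))) by (intros; f_equal; ring).
    ring. }
  assert (HD1 : D 1 = (AM n x - GM n x) - (AM n (compl x) - GM n (compl x))).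
  { unfold D, E.
    rewrite (GM_exp_AM_ln n x), (GM_exp_AM_ln n (compl x))
      by (intros i Hi; specialize (Hx i Hi); unfold compl; lra).
    rewrite (AM_ext n (fun i => ln (1/2 + 1 * k i)) (fun i => ln (compl x i)))
      by (intros; unfold compl, k; cbv beta; f_equal; field).
    rewrite (AM_ext n (fun i => ln (1/2 + 1 * - k i)) (fun i => ln (x i)))
      by (intros; unfold k; cbv beta; f_equal; ring).
    unfold compl, k. rewrite (AM_ext n (fun i => 1/2 - x i) (fun i => 1/2 + -1 * x i)),
      (AM_ext n (fun i => 1 - x i) (fun i => 1 + -1 * x i)), !AM_affine by (auto || intros; ring).
    field. }
  enough (D 0 < D 1) by lra.
  apply (lt_of_is_derive_pos D dD); [lra | |].
  - intros c Hc. unfold D, dD.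
    apply (is_derive_minus (fun s => E k s - E (fun i => - k i) s) (fun s => 2 * s * AM n k));
      [apply (is_derive_minus (E k) (E (fun i => - k i)))|].
    + apply (is_derive_exp_AM_ln n (fun _ => 1/2) k). intros; apply Hplus; lra || auto.
    + apply (is_derive_exp_AM_ln n (fun _ => 1/2) (fun i => - k i)). intros; apply Hminus; lra || auto.
    + auto_derive; [exact I | ring].
  - intros c Hc. unfold dD, dE, E.
    rewrite <- !GM_exp_AM_ln by (intros; apply Hplus || apply Hminus; lra || auto).
    rewrite (GM_ext n (fun i => 1/2 + c * - k i) (fun i => 1/2 - c * k i)) by (intros; ring).
    rewrite (AM_ext n (fun i => - k i / (1/2 + c * - k i)) (fun i => -1 * (k i / (1/2 - c * k i))))
      by (intros; replace (1/2 + c * - k i) with (1/2 - c * k i) by ring; unfold Rdiv; ring).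
    rewrite AM_scal by auto.
    enough (2 * AM n k < GM n (fun i => 1/2 + c * k i) * AM n (fun i => k i / (1/2 + c * k i))
            + GM n (fun i => 1/2 - c * k i) * AM n (fun i => k i / (1/2 - c * k i))) by lra.
    apply twice_AM_lt_GM_symmetric; auto; [lra | |].
    + intros i Hi. specialize (Hminus c i ltac:(lra) Hi). lra.
    + intros Hck. apply Hnc. intros i j Hi Hj. specialize (Hck i j Hi Hj). unfold k in Hck. lra.
Qed.

Lemma half_sub_inv_lt_ln r : 0 < r < 1 -> (r - / r) / 2 < ln r.
Proof.
  intros Hr.
  assert (Hlt : r - / r - 2 * ln r < 1 - / 1 - 2 * ln 1).
  { apply (lt_of_is_derive_pos (fun s => s - / s - 2 * ln s)
             (fun s => (1 - s) * (1 - s) / (s * s))); [lra | |].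
    - intros c Hc. auto_derive; [lra | field; lra].
    - intros c Hc. apply Rdiv_lt_0_compat; nra. }
  rewrite ln_1, Rinv_1 in Hlt. lra.
Qed.

Lemma ln_div_one_sub_lt s t : 0 < s -> s < t -> t < 1 -> ln s / (1 - s) < ln t / (1 - t).
Proof.
  intros Hs Hst Ht.
  apply (lt_of_is_derive_pos (fun r => ln r / (1 - r))
           (fun r => ((1 - r) / r + ln r) / ((1 - r) * (1 - r)))); [lra | |].
  - intros c Hc. auto_derive; [lra | field; lra].
  - intros c Hc. apply Rdiv_lt_0_compat; [|nra].
    pose proof (ln_lt_tangent 1 c ltac:(lra) ltac:(lra) ltac:(lra)). rewrite ln_1 in H. lra.
Qed.

Lemma one_add_mul_ln_div_one_sub_lt s t : 0 < s -> s < t -> t < 1 ->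
  (1 + s) * ln s / (1 - s) < (1 + t) * ln t / (1 - t).
Proof.
  intros Hs Hst Ht.
  apply (lt_of_is_derive_pos (fun r => (1 + r) * ln r / (1 - r))
           (fun r => (2 * ln r + (/ r - r)) / ((1 - r) * (1 - r)))); [lra | |].
  - intros c Hc. auto_derive; [lra | field; lra].
  - intros c Hc. apply Rdiv_lt_0_compat; [|nra].
    pose proof (half_sub_inv_lt_ln c ltac:(lra)). lra.
Qed.

Lemma Rpower_ratio_lt A G A' G' : 0 < G < A -> 0 < G' < A' -> A <= A' -> A' - G' < A - G ->
  Rpower (A' / G') (A' + G') < Rpower (A / G) (A + G) /\
  Rpower (A' / G') (A - G) < Rpower (A / G) (A' - G').
Proof.
  intros HG HG' HAA' Hgap.
  assert (Hratio : forall a b, 0 < b < a ->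
            0 < b / a < 1 /\ b = a * (b / a) /\ ln (a / b) = - ln (b / a)).
  { intros a b Hab. split; [split|split].
    - apply Rdiv_lt_0_compat; lra.
    - apply (Rmult_lt_reg_r a); [lra|]. unfold Rdiv. rewrite Rmult_assoc, Rinv_l; lra.
    - field; lra.
    - rewrite <- ln_Rinv by (apply Rdiv_lt_0_compat; lra). f_equal. field; lra. }
  destruct (Hratio A G HG) as [Hr [EG Eln]]. destruct (Hratio A' G' HG') as [Hr' [EG' Eln']].
  set (r := G / A) in *. set (r' := G' / A') in *.
  unfold Rpower. rewrite Eln, Eln'. rewrite EG, EG' in *.
  assert (Hrr : r < r') by nra.
  pose proof (ln_div_one_sub_lt r r' ltac:(lra) Hrr ltac:(lra)) as H1.
  pose proof (one_add_mul_ln_div_one_sub_lt r r' ltac:(lra) Hrr ltac:(lra)) as H2.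
  assert (Hln' : ln r' < 0) by (rewrite <- ln_1; apply ln_increasing; lra).
  set (Y := ln r / (1 - r)) in *. set (Y' := ln r' / (1 - r')) in *.
  set (X := (1 + r) * ln r / (1 - r)) in *. set (X' := (1 + r') * ln r' / (1 - r')) in *.
  assert (HX' : X' < 0) by (apply Rdiv_neg_pos; nra).
  assert (HY' : Y' < 0) by (apply Rdiv_neg_pos; lra).
  split; apply exp_increasing.
  - replace ((A' + A' * r') * - ln r') with (- (A' * (1 - r') * X')) by (unfold X'; field; lra).
    replace ((A + A * r) * - ln r) with (- (A * (1 - r) * X)) by (unfold X; field; lra).
    nra.
  - replace ((A - A * r) * - ln r') with (- (A * (1 - r) * (1 - r') * Y')) by (unfold Y'; field; lra).
    replace ((A' - A' * r') * - ln r) with (- (A' * (1 - r) * (1 - r') * Y)) by (unfold Y; field; lra).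
    assert (HAY : A' * Y <= A * Y) by nra.
    assert (HYY : A * Y < A * Y') by nra.
    assert (0 < (1 - r) * (1 - r')) by nra.
    nra.
Qed.

Lemma Rpower_div_diag a y : 0 < a -> Rpower (a / a) y = 1.
Proof. intros Ha. unfold Rpower. rewrite Rdiv_diag, ln_1, Rmult_0_r by lra. apply exp_0. Qed.

Theorem mainTheorem7 (n : nat) (x : nat -> R) :
  (1 <= n)%nat ->
  (forall i, (i < n)%nat -> 0 < x i <= 1/2) ->
  let A := AM n x in let G := GM n x in
  let A' := AM n (compl x) in let G' := GM n (compl x) in
  (Rpower (A' / G') (A' + G') <= Rpower (A / G) (A + G) /\
   (Rpower (A' / G') (A' + G') = Rpower (A / G) (A + G) <->
      (forall i j, (i < n)%nat -> (j < n)%nat -> x i = x j))) /\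
  (Rpower (A' / G') (A - G) <= Rpower (A / G) (A' - G') /\
   (Rpower (A' / G') (A - G) = Rpower (A / G) (A' - G') <->
      (forall i j, (i < n)%nat -> (j < n)%nat -> x i = x j))).
Proof.
  intros Hn Hx A G A' G'.
  change (forall i j, (i < n)%nat -> (j < n)%nat -> x i = x j) with (constant_on n x).
  assert (Hpos : forall i, (i < n)%nat -> 0 < x i) by (intros i Hi; specialize (Hx i Hi); lra).
  assert (Hpos' : forall i, (i < n)%nat -> 0 < compl x i)
    by (intros i Hi; specialize (Hx i Hi); unfold compl; lra).
  assert (HG : 0 < G) by apply GM_pos. assert (HG' : 0 < G') by apply GM_pos.
  assert (Hconst : constant_on n x -> G = A /\ G' = A').
  { intros Hc. split; apply GM_eq_AM_of_constant; auto.
    intros i j Hi Hj. unfold compl. rewrite (Hc i j); auto. }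
  assert (Hnonconst : ~ constant_on n x ->
            Rpower (A' / G') (A' + G') < Rpower (A / G) (A + G) /\
            Rpower (A' / G') (A - G) < Rpower (A / G) (A' - G')).
  { intros Hnc. apply Rpower_ratio_lt.
    - split; [exact HG | apply GM_lt_AM; auto].
    - split; [exact HG' | apply GM_lt_AM; auto].
      intros Hc. apply Hnc. intros i j Hi Hj. specialize (Hc i j Hi Hj). unfold compl in Hc. lra.
    - apply AM_le; auto. intros i Hi. specialize (Hx i Hi). unfold compl. lra.
    - apply AM_sub_GM_compl_lt; auto. }
  split; apply le_and_eq_iff_of_lt; intros Hc;
    try (destruct (Hconst Hc) as [EG EG']; rewrite EG, EG', !Rpower_div_diag; lra);
    apply Hnonconst, Hc.
Qed.
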